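(* Let $h$ and $k$ be relatively prime odd integers with $k>0$. Then $$B_{1}(h,k)=-10h\,s(h,k)+4h\,s(2h,k)+4h\,s(h,2k)+\frac{1}{2k}-\frac{1}{2}.$$
   Context: $[x]$ denotes the greatest integer $\le x$, and $((x))=x-[x]-\tfrac12$ if $x\notin\mathbb{Z}$, $((x))=0$ if $x\in\mathbb{Z}$. For integers $a,b$ with $b>0$: the Dedekind sum is $s(a,b)=\sum_{j=1}^{b-1}\left(\left(\frac{aj}{b}\right)\right)\left(\left(\frac{j}{b}\right)\right)$, and (for $\gcd(a,b)=1$) $$B_{1}(a,b)=\sum_{j=1}^{b-1}(-1)^{j+\left[\frac{aj}{b}\right]}\left[\frac{aj}{b}\right].$$ *)

From mathcomp Require Import all_boot all_order all_algebra.
Set Implicit Arguments. Unset Strict Implicit. Unset Printing Implicit Defensive.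
Import Order.TTheory GRing.Theory Num.Theory.
Local Open Scope ring_scope.

Definition sawtooth (x : rat) : rat :=
  if x \is a Num.int then 0 else x - (Num.floor x)%:~R - 1 / 2.

Definition dedekind_sum (a b : int) : rat :=
  \sum_(1 <= j < `|b|%N)
     sawtooth ((a * j%:Z)%:~R / b%:~R) * sawtooth ((j%:Z)%:~R / b%:~R).

Definition B1 (a b : int) : rat :=
  \sum_(1 <= j < `|b|%N)
     let f := Num.floor ((a * j%:Z)%:~R / b%:~R : rat) in
     (-1) ^ (j%:Z + f) * f%:~R.

(* Write [h j = q j * k + r j] with [0 < r j < k].  As [j] runs over [1, k), so
   does [r j], and every summand of [B1 h k], [s(h,k)], [s(2h,k)] and [s(h,2k)] is
   an explicit rational expression in [j], [r j], the indicator [k < 2 r j]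
   (which decides the residue of [2 h j] modulo [k]) and the parity of [q j]
   (which decides whether the residue of [h j] modulo [2k] is [r j] or [r j + k]).
   Summing, the cross term [sum j * r j] cancels from the combination
   [-10 s(h,k) + 4 s(2h,k) + 4 s(h,2k)], and what is left is a linear relation
   between weighted counts.  That relation follows from reindexing by the two
   symmetries of the residues: [j |-> k - j] (which sends [r j] to [k - r j]) and
   [j |-> 2 j mod k] (which doubles [r j] modulo [k]). *)

From mathcomp Require Import all_boot all_order all_algebra.
From mathcomp Require Import zify ring lra.
Set Implicit Arguments. Unset Strict Implicit. Unset Printing Implicit Defensive.
Import Order.TTheory GRing.Theory Num.Theory.

Lemma modn_double n x : x < n -> (2 * x) %% n = 2 * x - (n <= 2 * x) * n.
Proof.
move=> lt_xn; case: leqP => [le_n2x | lt_2xn]; last by rewrite subn0 modn_small.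
by rewrite mul1n -[in LHS](subnK le_n2x) modnDr modn_small //; lia.
Qed.

Lemma odd_leq_double n x : odd n -> (n <= 2 * x) = (n < 2 * x).
Proof.
move=> odd_n; have ne_n2x : n != 2 * x by apply: contraTneq odd_n => ->; rewrite oddM.
by rewrite ltn_neqAle ne_n2x.
Qed.

Lemma odd_modn_double n x : odd n -> x < n -> odd ((2 * x) %% n) = (n < 2 * x).
Proof.
move=> odd_n lt_xn; rewrite modn_double // -odd_leq_double //.
by case: leqP => //= le_n2x; rewrite oddB ?mul1n // oddM.
Qed.

Lemma big_nat1_rev (R : Type) (idx : R) (op : Monoid.com_law idx) n (F : nat -> R) :
  \big[op/idx]_(1 <= j < n) F j = \big[op/idx]_(1 <= j < n) F (n - j).
Proof. by rewrite big_nat_rev; apply: eq_big_nat => j _; rewrite add1n subSS. Qed.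

Section MulResidues.
Variables (a n : nat).
Hypothesis co_an : coprime a n.
Local Notation r j := ((a * j) %% n).

Lemma eqn_modMl_coprime i j : (a * i == a * j %[mod n]) = (i == j %[mod n]).
Proof.
wlog le_ij : i j / i <= j => [hwlog|].
  by case: (leqP i j) => [/hwlog // | /ltnW /hwlog]; rewrite eq_sym => ->; rewrite eq_sym.
rewrite eq_sym [in RHS]eq_sym eqn_mod_dvd ?leq_mul2l ?le_ij ?orbT //.
by rewrite eqn_mod_dvd // -mulnBr Gauss_dvdr // coprime_sym.
Qed.

Lemma residue_inj i j : i < n -> j < n -> r i = r j -> i = j.
Proof.
move=> lt_in lt_jn /eqP; rewrite eqn_modMl_coprime !modn_small //.
exact: eqP.
Qed.

Lemma residue_eq0 j : j < n -> (r j == 0) = (j == 0).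
Proof.
move=> lt_jn; apply/eqP/eqP => [r0|->]; last by rewrite muln0 mod0n.
by apply: residue_inj => //; [exact: leq_ltn_trans lt_jn | rewrite muln0 mod0n].
Qed.

Lemma residue_subn j : 0 < j < n -> r (n - j) = n - r j.
Proof.
case/andP=> j_gt0 lt_jn; have n_gt0 : 0 < n := ltn_trans j_gt0 lt_jn.
have rj_gt0 : 0 < r j by rewrite lt0n residue_eq0 // -lt0n.
rewrite mulnBr modnB // ?leq_mul2l ?(ltnW lt_jn) ?orbT // modnMl rj_gt0.
by rewrite mul1n addn0.
Qed.

Lemma residue_bounds j : 0 < j < n -> 0 < r j < n.
Proof.
case/andP=> j_gt0 lt_jn; rewrite lt0n residue_eq0 -?lt0n // j_gt0 ltn_pmod //.
exact: ltn_trans lt_jn.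
Qed.

Lemma residue_double j : r ((2 * j) %% n) = (2 * r j) %% n.
Proof. by rewrite !modnMmr mulnCA. Qed.

Lemma big_residue (R : Type) (idx : R) (op : Monoid.com_law idx) (F : nat -> R) :
  \big[op/idx]_(1 <= j < n) F (r j) = \big[op/idx]_(1 <= j < n) F j.
Proof.
case: (posnP n) => [-> | n_gt0]; first by rewrite !big_geq.
have shift G : \big[op/idx]_(1 <= j < n) G j = \big[op/idx]_(j < n | 0 < j) G j.
  rewrite -big_mkord [RHS]big_ltn_cond //= big_nat_cond [RHS]big_nat_cond.
  by apply: eq_bigl => -[|i]; rewrite ?andbF ?andbT.
pose rho (i : 'I_n) : 'I_n := Ordinal (ltn_pmod (a * i) n_gt0).
have rho_inj : injective rho.
  by move=> i j /(congr1 val) /residue_inj eq_ij; apply/val_inj/eq_ij.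
rewrite !shift [RHS](reindex_inj rho_inj) /=; apply: eq_bigl => i.
by rewrite !lt0n residue_eq0.
Qed.

End MulResidues.

Section ResidueCounts.
Variables (a n : nat).
Hypotheses (odd_n : odd n) (co_an : coprime a n).
Local Notation r j := ((a * j) %% n).

Lemma parity_residue_subn j :
  0 < j < n -> odd (n - j + r (n - j)) = odd (j + r j).
Proof.
move=> j_range; rewrite residue_subn //.
by have := residue_bounds co_an j_range; move: j_range (r j) => /andP[? ?] x; lia.
Qed.

Lemma sum_residue_gt_half : 2 * \sum_(1 <= j < n) (n < 2 * r j) = n.-1.
Proof.
have pair j : 1 <= j < n -> (n < 2 * r j) + (n < 2 * r (n - j)) = 1.
  move=> j_range; rewrite residue_subn //.
  by have := residue_bounds co_an j_range; move: (r j) => x; lia.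
rewrite mul2n -addnn [X in _ + X]big_nat1_rev -big_split /= (eq_big_nat _ _ pair).
by rewrite sum_nat_const_nat muln1 subn1.
Qed.

Lemma sum_mul_parity_residue :
  2 * \sum_(1 <= j < n) j * odd (j + r j) = n * \sum_(1 <= j < n) odd (j + r j).
Proof.
rewrite mul2n -addnn [X in _ + X]big_nat1_rev -big_split big_distrr /=.
apply: eq_big_nat => j j_range; rewrite parity_residue_subn //.
by case/andP: j_range => _ /ltnW; rewrite -mulnDl => /subnKC ->.
Qed.

(* Reindex by [j |-> 2 j mod n]: then [odd (r j)] becomes [n < 2 r j]. *)
Lemma sum_mul_odd_residue :
  \sum_(1 <= j < n) j * odd (r j) + n * \sum_(1 <= j < n) (n < 2 * j) * (n < 2 * r j) =
  2 * \sum_(1 <= j < n) j * (n < 2 * r j).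
Proof.
have co_2n : coprime 2 n by rewrite coprime2n.
rewrite -(big_residue co_2n _ (fun j => j * odd (r j))) !big_distrr -big_split /=.
apply: eq_big_nat => j /andP[_ lt_jn].
have lt_rjn : r j < n by rewrite ltn_pmod // (leq_ltn_trans _ lt_jn).
rewrite residue_double odd_modn_double // modn_double //.
by move: (r j) => x; lia.
Qed.

(* [j |-> n - j] flips the parity of [j] but not that of [j + r j], and
   [j |-> 2 j mod n] maps even [j] to those with [2 j < n]. *)
Lemma sum_parity_residue :
  2 * \sum_(1 <= j < n) (n < 2 * j) * (n < 2 * r j) + \sum_(1 <= j < n) odd (j + r j)
  = n.-1.
Proof.
have co_2n : coprime 2 n by rewrite coprime2n.
have split_parity : \sum_(1 <= j < n) odd (j + r j) =
    2 * \sum_(1 <= j < n) ~~ odd j * odd (j + r j).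
  rewrite mul2n -addnn [X in _ + X]big_nat1_rev -big_split /=.
  apply: eq_big_nat => j j_range; rewrite parity_residue_subn //.
  by case/andP: j_range => ? ?; case: (odd (j + r j)); rewrite ?muln1 ?muln0 //; lia.
have even_parity : \sum_(1 <= j < n) ~~ odd j * odd (j + r j) =
    \sum_(1 <= j < n) ~~ (n < 2 * j) * (n < 2 * r j).
  rewrite -(big_residue co_2n _ (fun j => ~~ odd j * odd (j + r j))).
  apply: eq_big_nat => j /andP[_ lt_jn].
  have lt_rjn : r j < n by rewrite ltn_pmod // (leq_ltn_trans _ lt_jn).
  rewrite residue_double oddD !odd_modn_double //.
  by case: (n < 2 * j); case: (n < 2 * r j).
rewrite split_parity even_parity -mulnDr -big_split /= -sum_residue_gt_half.
by congr (2 * _); apply: eq_big_nat => j _; case: (n < 2 * j); case: (n < 2 * r j).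
Qed.

End ResidueCounts.

Lemma sum_nat_double m : \sum_(1 <= j < m.*2.+1) j = m * m.*2.+1.
Proof.
elim: m => [|m IHm]; first by rewrite big_geq.
by rewrite doubleS big_nat_recr // big_nat_recr //= IHm; lia.
Qed.

Lemma sum_odd_nat_double m : \sum_(1 <= j < m.*2.+1) odd j * j = m * m.
Proof.
elim: m => [|m IHm]; first by rewrite big_geq.
by rewrite doubleS big_nat_recr // big_nat_recr //= IHm odd_double /=; lia.
Qed.

Local Open Scope ring_scope.

Lemma sawtoothN x : sawtooth (- x) = - sawtooth x.
Proof.
rewrite /sawtooth rpredN; case: ifP => [_ | x_nint]; first by rewrite oppr0.
have := ceil_floor x; rewrite ceilNfloor x_nint => /(congr1 -%R); rewrite opprK => ->.
by rewrite /= intrN intrD; lra.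
Qed.

Lemma sawtoothDz x (z : int) : sawtooth (x + z%:~R) = sawtooth x.
Proof.
rewrite /sawtooth rpredDr ?rpred_int //; case: ifP => // _.
rewrite floorDrz ?rpred_int // intrKfloor intrD; lra.
Qed.

Lemma sawtooth_half : sawtooth (1 / 2) = 0.
Proof.
have half_floor : Num.floor (1 / 2 : rat) = 0 by apply: floor_def; rewrite /=; lra.
by rewrite /sawtooth intrEfloor half_floor /= subr0 subrr.
Qed.

Lemma euclid_divE (N q : int) (D r : nat) : N = q * D%:Z + r%:Z ->
  (D > 0)%N -> N%:~R / D%:~R = q%:~R + r%:R / D%:R :> rat.
Proof.
move=> -> D_gt0; rewrite intrD intrM -!pmulrn; field.
by rewrite pnatr_eq0 -lt0n.
Qed.

Lemma floor_euclid (N q : int) (D r : nat) :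
  (0 < r < D)%N -> N = q * D%:Z + r%:Z -> Num.floor (N%:~R / D%:~R : rat) = q.
Proof.
move=> /andP[r_gt0 lt_rD] N_eq; have D_gt0 := ltn_trans r_gt0 lt_rD.
have frac_gt0 : (0 : rat) < r%:R / D%:R by rewrite divr_gt0 ?ltr0n.
have frac_lt1 : (r%:R / D%:R : rat) < 1 by rewrite ltr_pdivrMr ?ltr0n // mul1r ltr_nat.
by apply: floor_def; rewrite (euclid_divE N_eq) // intrD; apply/andP; split; lra.
Qed.

Lemma sawtooth_euclid (N q : int) (D r : nat) :
  (0 < r < D)%N -> N = q * D%:Z + r%:Z ->
  sawtooth (N%:~R / D%:~R) = r%:R / D%:R - 1 / 2.
Proof.
move=> r_range N_eq; have /andP[r_gt0 lt_rD] := r_range.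
have D_gt0 := ltn_trans r_gt0 lt_rD.
have frac_gt0 : (0 : rat) < r%:R / D%:R by rewrite divr_gt0 ?ltr0n.
rewrite /sawtooth intrEfloor (floor_euclid r_range N_eq) (euclid_divE N_eq) //.
by rewrite lt_eqF ?ltrDl //=; lra.
Qed.

Lemma sawtooth_small (j D : nat) : (0 < j < D)%N ->
  sawtooth (j%:~R / D%:~R) = j%:R / D%:R - 1 / 2.
Proof. by move=> j_range; apply: (@sawtooth_euclid _ 0); rewrite ?mul0r ?add0r. Qed.

Lemma big_nat_double (R : nmodType) (F : nat -> R) n : (0 < n)%N ->
  \sum_(1 <= j < (2 * n)%N) F j = \sum_(1 <= j < n) (F j + F (2 * n - j)%N) + F n.
Proof.
move=> n_gt0; rewrite big_split /= -addrA (@big_cat_nat _ _ _ n) //=; last by lia.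
rewrite (@big_ltn _ _ _ n); last by lia.
rewrite [F n + _]addrC; congr (_ + (_ + _)).
have -> : (2 * n = n + n)%N by rewrite mul2n addnn.
rewrite -[n.+1]add1n big_addn addnK big_nat_rev; apply: eq_big_nat => j /andP[_ lt_jn].
by rewrite add1n subSS addnC addnBA // ltnW.
Qed.

Lemma dedekind_sum_double_modulus (a : int) (n : nat) : (0 < n)%N ->
  dedekind_sum a (2 * n)%N = 2 * \sum_(1 <= j < n)
     sawtooth ((a * j%:Z)%:~R / (2 * n)%N%:~R) * sawtooth ((j%:Z)%:~R / (2 * n)%N%:~R).
Proof.
move=> n_gt0; have n_neq0 : n%:R != 0 :> rat by rewrite pnatr_eq0 -lt0n.
rewrite /dedekind_sum absz_nat big_nat_double //.
have -> : n%:~R / (2 * n)%N%:~R = 1 / 2 :> rat.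
  by rewrite -!pmulrn natrM; field.
rewrite sawtooth_half mulr0 addr0 mulr_natl mulr2n -big_split /=.
apply: eq_big_nat => j /andP[_ lt_jn]; congr (_ + _).
have mirror (b : int) : (b * (2 * n - j)%N%:Z)%:~R / (2 * n)%N%:~R =
    - ((b * j%:Z)%:~R / (2 * n)%N%:~R) + b%:~R :> rat.
  rewrite !intrM -!pmulrn natrB; last by rewrite ltnW // (leq_trans lt_jn) // leq_pmull.
  by field.
have := mirror 1; rewrite !mul1r => ->.
by rewrite mirror !sawtoothDz !sawtoothN mulrNN.
Qed.

Lemma signz_addn_even (R : fieldType) (n : nat) (w : int) :
  (-1 : R) ^ (n%:Z + 2 * w) = (-1) ^+ n.
Proof.
rewrite expfzDr ?oppr_eq0 ?oner_eq0 // -exprz_exp.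
by rewrite [(-1) ^ 2%:Z]sqrrN expr1n exp1rz mulr1.
Qed.

Section OddModulus.
Variables (h : int) (m : nat).
Local Notation k := m.*2.+1.
Hypotheses (odd_h : odd `|h|%N) (co_hk : coprime `|(h %% k)%Z|%N k).
Local Notation a := `|(h %% k)%Z|%N.
Local Notation r j := ((a * j) %% k)%N.
Local Notation q j := ((h * j%:Z) %/ k)%Z.

Lemma odd_k : odd k. Proof. by rewrite /= odd_double. Qed.

Lemma natr_k : k%:R = 2 * m%:R + 1 :> rat.
Proof. by rewrite -addn1 -muln2 natrD natrM mulrC. Qed.

Lemma natr_k_neq0 : 2 * m%:R + 1 != 0 :> rat.
Proof. by rewrite -natr_k pnatr_eq0. Qed.

Lemma residue_euclid j : h * j%:Z = q j * k + (r j)%:Z.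
Proof.
rewrite {1}(divz_eq (h * j%:Z) k); congr (_ + _).
by rewrite -modzMml -modz_nat PoszM gez0_abs // modz_ge0.
Qed.

Lemma quotient_parity j : exists w : int, j%:Z + q j = (r j)%:Z + 2 * w.
Proof.
have := residue_euclid j; move: (q j) (r j) => q' r' euclid.
have [h' h_eq] : exists h' : int, h = 2 * h' + 1 by exists (h %/ 2)%Z; lia.
exists (j%:Z - r'%:Z + h' * j%:Z - m%:Z * q'); move: euclid; rewrite h_eq; lia.
Qed.

Lemma floor_residue j : (0 < j < k)%N -> Num.floor ((h * j%:Z)%:~R / k%:~R : rat) = q j.
Proof. by move=> j_range; apply: floor_euclid (residue_euclid j); apply: residue_bounds. Qed.

Lemma sawtooth_residue j : (0 < j < k)%N ->
  sawtooth ((h * j%:Z)%:~R / k%:~R) = (r j)%:R / k%:R - 1 / 2.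
Proof. by move=> j_range; apply: sawtooth_euclid (residue_euclid j); apply: residue_bounds. Qed.

Lemma sawtooth_double_arg_residue j : (0 < j < k)%N ->
  sawtooth ((2 * h * j%:Z)%:~R / k%:~R) = ((2 * r j) %% k)%:R / k%:R - 1 / 2.
Proof.
move=> j_range; have := residue_bounds co_hk j_range; have := residue_euclid j.
have := odd_k; move: (q j) (r j) => q' r' k_odd euclid r_range.
apply: (@sawtooth_euclid _ (2 * q' + (k <= 2 * r')%N%:Z)); rewrite modn_double; lia.
Qed.

Lemma sawtooth_double_modulus_residue j : (0 < j < k)%N ->
  sawtooth ((h * j%:Z)%:~R / (2 * k)%N%:~R) =
  (r j + k * odd (j + r j))%:R / (2 * k)%N%:R - 1 / 2.
Proof.
move=> j_range; have := residue_bounds co_hk j_range; have := residue_euclid j.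
have [w] := quotient_parity j; move: (q j) (r j) => q' r' parity euclid r_range.
apply: (@sawtooth_euclid _ (w - j%:Z + ((j + r')./2)%N%:Z)).
  by case: (odd (j + r')); lia.
have := odd_double_half (j + r'); lia.
Qed.

(* [odd (j + r j)] is the parity of [q j], since [h] and [k] are odd. *)
Local Notation cross := (\sum_(1 <= j < k) j * r j)%N.
Local Notation odd_weight := (\sum_(1 <= j < k) j * odd (r j))%N.
Local Notation parity_weight := (\sum_(1 <= j < k) j * odd (j + r j))%N.
Local Notation upper_weight := (\sum_(1 <= j < k) j * (k < 2 * r j))%N.
Local Notation parity_count := (\sum_(1 <= j < k) odd (j + r j))%N.

Lemma sum_residue : (\sum_(1 <= j < k) r j)%N = (m * k)%N.
Proof. by rewrite (big_residue co_hk _ (fun x => x)) sum_nat_double. Qed.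

Lemma sum_odd_residue : (\sum_(1 <= j < k) odd (r j) * r j)%N = (m * m)%N.
Proof. by rewrite (big_residue co_hk _ (fun x => odd x * x)%N) sum_odd_nat_double. Qed.

Lemma quotient_residueE j :
  (q j)%:~R = (h%:~R * j%:R - (r j)%:R) / k%:R :> rat.
Proof.
have /(congr1 (fun z : int => z%:~R : rat)) := residue_euclid j.
rewrite /= intrD !intrM -!pmulrn natr_k => ->; field; exact: natr_k_neq0.
Qed.

Lemma B1_summandE j : (0 < j < k)%N ->
  (let f := Num.floor ((h * j%:Z)%:~R / k%:~R : rat) in (-1) ^ (j%:Z + f) * f%:~R : rat) =
  (h%:~R * (j%:R - 2 * (j * odd (r j))%N%:R) - ((r j)%:R - 2 * (odd (r j) * r j)%N%:R))
  / k%:R.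
Proof.
move=> j_range /=; rewrite floor_residue //.
have [w ->] := quotient_parity j; rewrite signz_addn_even -signr_odd quotient_residueE.
by case: (odd (r j)); rewrite /= ?mul1n ?mul0n ?muln1 ?muln0 natr_k;
  field; exact: natr_k_neq0.
Qed.

Lemma B1_closed :
  B1 h k = (h%:~R * ((m * k)%N%:R - 2 * odd_weight%:R) - m%:R) / k%:R.
Proof.
rewrite /B1 absz_nat (eq_big_nat _ _ B1_summandE) -mulr_suml big_split /= sumrN.
rewrite -!mulr_sumr !big_split /= !sumrN -!mulr_sumr -!natr_sum.
rewrite sum_nat_double sum_residue sum_odd_residue.
by congr ((_ - _) / _); rewrite !natrM -addn1 -muln2 natrD natrM; ring.
Qed.

Lemma dedekind_sum_closed :
  dedekind_sum h k = cross%:R / k%:R ^+ 2 - m%:R / 2.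
Proof.
have term j : (0 < j < k)%N ->
    sawtooth ((h * j%:Z)%:~R / k%:~R) * sawtooth (j%:~R / k%:~R) =
    (j * r j)%N%:R / k%:R ^+ 2 - (r j + j)%N%:R / (2 * k%:R) + 1 / 4.
  move=> j_range; rewrite sawtooth_residue // sawtooth_small //.
  by rewrite natrD natrM natr_k; field; exact: natr_k_neq0.
rewrite /dedekind_sum (eq_big_nat _ _ term) !big_split /= sumrN.
rewrite -!mulr_suml -!natr_sum sumr_const_nat big_split /= sum_residue sum_nat_double.
by rewrite natrB // !natrD !natrM natr_k; field; exact: natr_k_neq0.
Qed.

Lemma sum_upper_residue : (\sum_(1 <= j < k) (k < 2 * r j))%N = m.
Proof. by have := sum_residue_gt_half odd_k co_hk; rewrite /=; lia. Qed.

Lemma dedekind_sum_double_arg_closed :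
  dedekind_sum (2 * h) k = 2 * cross%:R / k%:R ^+ 2 - upper_weight%:R / k%:R - m%:R / 2.
Proof.
have term j : (0 < j < k)%N ->
    sawtooth ((2 * h * j%:Z)%:~R / k%:~R) * sawtooth (j%:~R / k%:~R) =
    2 * (j * r j)%N%:R / k%:R ^+ 2 - (j * (k < 2 * r j))%N%:R / k%:R
    - (2 * r j + j)%N%:R / (2 * k%:R) + (k < 2 * r j)%N%:R / 2 + 1 / 4.
  move=> j_range; have /andP[_ lt_rk] := residue_bounds co_hk j_range.
  rewrite sawtooth_double_arg_residue // sawtooth_small // modn_double //.
  rewrite odd_leq_double ?odd_k // natrB; last by case: ltnP; rewrite ?mul1n // => /ltnW.
  by rewrite !natrD !natrM natr_k; field; exact: natr_k_neq0.
rewrite /dedekind_sum (eq_big_nat _ _ term) !big_split /= !sumrN.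
rewrite -!mulr_suml -!mulr_sumr -!natr_sum sumr_const_nat.
rewrite big_split /= -big_distrr /= sum_residue sum_nat_double sum_upper_residue.
by rewrite natrB // !natrD !natrM natr_k; field; exact: natr_k_neq0.
Qed.

Lemma dedekind_sum_double_modulus_closed :
  dedekind_sum h (2 * k)%N =
  (cross%:R / k%:R ^+ 2 + parity_weight%:R / k%:R - parity_count%:R) / 2.
Proof.
have term j : (0 < j < k)%N ->
    sawtooth ((h * j%:Z)%:~R / (2 * k)%N%:~R) * sawtooth (j%:~R / (2 * k)%N%:~R) =
    (j * r j)%N%:R / (4 * k%:R ^+ 2) - (r j + j)%N%:R / (4 * k%:R)
    + (j * odd (j + r j))%N%:R / (4 * k%:R) - (odd (j + r j))%:R / 4 + 1 / 4.
  move=> j_range; have j_range2 : (0 < j < 2 * k)%N by lia.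
  rewrite sawtooth_double_modulus_residue // sawtooth_small //.
  by rewrite natrD natrM !natrD !natrM natr_k; field; exact: natr_k_neq0.
rewrite dedekind_sum_double_modulus // (eq_big_nat _ _ term) !big_split /= !sumrN.
rewrite -!mulr_suml -!natr_sum sumr_const_nat big_split /= sum_residue sum_nat_double.
by rewrite natrB // !natrD !natrM natr_k; field; exact: natr_k_neq0.
Qed.

Lemma weight_identity :
  (2 * upper_weight + k * parity_count = odd_weight + parity_weight + m * k)%N.
Proof.
have := sum_mul_odd_residue odd_k co_hk; have := sum_mul_parity_residue odd_k co_hk.
have /(congr1 (muln k)) := sum_parity_residue odd_k co_hk.
rewrite /=; lia.
Qed.

Lemma B1_dedekind_sums :
  B1 h k =
    - 10 * h%:~R * dedekind_sum h k + 4 * h%:~R * dedekind_sum (2 * h) k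
    + 4 * h%:~R * dedekind_sum h (2 * k%:Z) + 1 / (2 * k%:~R) - 1 / 2.
Proof.
have -> : 2 * k%:Z = (2 * k)%N by rewrite PoszM.
rewrite B1_closed dedekind_sum_closed dedekind_sum_double_arg_closed.
rewrite dedekind_sum_double_modulus_closed -pmulrn.
have /(congr1 (fun n : nat => n%:R : rat)) := weight_identity.
rewrite /= !natrD !natrM => weights.
have -> : upper_weight%:R = (odd_weight%:R + parity_weight%:R + m%:R * k%:R
   - k%:R * parity_count%:R) / 2 :> rat by rewrite -weights; field.
rewrite natr_k; field; exact: natr_k_neq0.
Qed.

End OddModulus.

Theorem theorem20 (h k : int) :
  odd `|h|%N -> odd `|k|%N -> 0 < k -> coprimez h k ->
  B1 h k =
    - 10 * h%:~R * dedekind_sum h k + 4 * h%:~R * dedekind_sum (2 * h) k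
    + 4 * h%:~R * dedekind_sum h (2 * k) + 1 / (2 * k%:~R) - 1 / 2.
Proof.
move=> odd_h; case: k => [n odd_n _ co_hn | //].
have [m n_eq] : exists m, n = m.*2.+1 by exists n./2; rewrite -[LHS]odd_double_half odd_n.
rewrite n_eq in co_hn *; apply: B1_dedekind_sums => //.
by move: co_hn; rewrite /coprimez -gcdz_modl.
Qed.
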